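(* Assume (C1)–(C3). Let $\alpha\in(0,1)$ and suppose there are $\gamma>0$, $\Gamma>0$ and $r_0\ge0$ such that $$A(x)-\Big(1-\frac{\gamma}{2}\Big)C_0(x)+B_0(x)\le-\Gamma|x|^{\gamma\alpha-\gamma+2},\qquad |x|\ge r_0,$$ and suppose further that $\gamma<2/(1-\alpha)$ and that there is $\Delta\ge1$ with $\Delta^{-1}\le C_0(x)\le\Delta$ for all $|x|\ge r_0$. Then there is $r'\ge r_0$ such that, with $I_0(r):=\int_{r'}^r\frac{\iota_0(s)}{s}ds$ for $r\ge r'$, $$\int_{r'}^\infty\Big(\int_{r'}^u e^{-I_0(v)}dv+1\Big)^\alpha\frac{e^{I_0(u)}}{\gamma_0(u)}du<\infty,$$ i.e. the integrability condition of Theorem 1.1 holds with $x_0=0$, base radius $r'$ and $\varphi(t)=t^\alpha$.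
   Context: Let $b:\mathbb{R}^d\to\mathbb{R}^d$, $\sigma:\mathbb{R}^d\to\mathbb{R}^{d\times n}$ Borel measurable, $\|M\|_{\mathrm{HS}}^2=\mathrm{Tr}\,MM^T$. (C1) for every $r>0$, $\sup_{|x|<r}(|b(x)|+\|\sigma(x)\|_{\mathrm{HS}})<\infty$; (C2) for every $r>0$ there is $\Gamma_r>0$ with $2\langle x-y,b(x)-b(y)\rangle+\|\sigma(x)-\sigma(y)\|^2_{\mathrm{HS}}\le\Gamma_r|x-y|^2$ for $|x|,|y|<r$; (C3) there is $\Gamma>0$ with $2\langle x,b(x)\rangle+\|\sigma(x)\|^2_{\mathrm{HS}}\le\Gamma(1+|x|^2)$. Notation: $c=\sigma\sigma^T$, $A(x)=\frac12\mathrm{Tr}\,c(x)$, $B_0(x)=\langle x,b(x)\rangle$, $C_0(x)=\langle x,c(x)x\rangle/|x|^2$ ($x\ne0$), $\gamma_0(r)=\inf_{|x|=r}C_0(x)$, $\iota_0(r)=\sup_{|x|=r}\frac{2A(x)-C_0(x)+2B_0(x)}{C_0(x)}$. *)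

From HB Require Import structures.
From mathcomp Require Import all_boot all_order all_algebra.
From mathcomp Require Import all_classical all_reals all_analysis.
Set Implicit Arguments. Unset Strict Implicit. Unset Printing Implicit Defensive.
Import Order.TTheory GRing.Theory Num.Theory.
Import numFieldNormedType.Exports.
Local Open Scope classical_set_scope.
Local Open Scope ring_scope.

Definition dotv (R : realType) (d : nat) (x y : 'cV[R]_d) : R :=
  \sum_(i < d) x i 0 * y i 0.
Definition enorm (R : realType) (d : nat) (x : 'cV[R]_d) : R :=
  Num.sqrt (dotv x x).

Definition hs2 (R : realType) (d n : nat) (M : 'M[R]_(d, n)) : R :=
  \tr (M *m M^T).
Definition hs (R : realType) (d n : nat) (M : 'M[R]_(d, n)) : R :=
  Num.sqrt (hs2 M).

Definition borel_fun (T U : topologicalType) (f : T -> U) : Prop :=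
  forall A : set U, open A -> <<s [set: T], [set B : set T | open B] >> (f @^-1` A).

Section Coefs.
Variables (R : realType) (d n : nat).
Variables (b : 'cV[R]_d -> 'cV[R]_d) (sigma : 'cV[R]_d -> 'M[R]_(d, n)).

Definition cmat (x : 'cV[R]_d) : 'M[R]_d := sigma x *m (sigma x)^T.
Definition Acoef (x : 'cV[R]_d) : R := 2^-1 * \tr (cmat x).
Definition B0 (x : 'cV[R]_d) : R := dotv x (b x).
(* C0 x = <x, c(x) x> / |x|^2, meaningful for x <> 0 *)
Definition C0 (x : 'cV[R]_d) : R := dotv x (cmat x *m x) / (enorm x ^+ 2).
Definition sphere (r : R) : set 'cV[R]_d := [set x | enorm x = r].
Definition gamma0 (r : R) : R := inf [set C0 x | x in sphere r].
Definition iota0 (r : R) : R :=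
  sup [set (2 * Acoef x - C0 x + 2 * B0 x) / C0 x | x in sphere r].

End Coefs.

Definition I0 (R : realType) (d n : nat) (b : 'cV[R]_d -> 'cV[R]_d)
  (sigma : 'cV[R]_d -> 'M[R]_(d, n)) (r' r : R) : R :=
  (\int[lebesgue_measure]_(s in `[r', r]) (iota0 b sigma s / s))%R.

From HB Require Import structures.
From mathcomp Require Import all_boot all_order all_algebra.
From mathcomp Require Import all_classical all_reals all_analysis.
From mathcomp Require Import ring lra.
Import Order.TTheory GRing.Theory Num.Theory.
Import numFieldNormedType.Exports.
Local Open Scope classical_set_scope.
Local Open Scope ring_scope.

(* Beyond a radius r' >= max (r0 + 1, 1) with Gam s^p >= Delta, the drift condition
   gives iota0(s) <= -c s^p with c = Gam / Delta, while (C1) bounds iota0 below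
   on compacts; hence I_0(u) = int_{r'}^u iota0(s)/s ds is nonpositive,
   nonincreasing and at most -(c/2) (u/2)^p for u >= 2r'.  Monotonicity gives
   int_{r'}^u e^(-I_0) <= (u - r') e^(-I_0(u)), so the integrand is at most
   Delta (u + 1) e^((1 - alpha) I_0(u)), which is O(u^(-2)) because a stretched
   exponential beats u^3; and int_{r'}^oo u^(-2) du is finite.

   Dimension 0
   is degenerate: all spheres are empty and the integrand vanishes. *)

(* Monotonicity of the integral of nonnegative functions.  The nonnegative
   integral is a supremum over simple minorants, so no measurability is needed. *)
Lemma ge0_le_integral_nomeas {R : realType} (D : set R) (f g : R -> \bar R) :
  (forall x, D x -> 0 <= f x)%E -> (forall x, D x -> f x <= g x)%E ->
  (\int[lebesgue_measure]_(x in D) f x <= \int[lebesgue_measure]_(x in D) g x)%E.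
Proof.
move=> f0 fg.
have g0 x : D x -> (0 <= g x)%E by move=> Dx; exact: le_trans (f0 _ Dx) (fg _ Dx).
rewrite !ge0_integralE//; apply: ereal_sup_le => _ [h /= hf <-].
by exists h => //= x; exact: le_trans (hf x) (lee_restrict fg x).
Qed.

Lemma ge0_subset_integral_nomeas {R : realType} (D E : set R) (f : R -> \bar R) :
  D `<=` E -> (forall x, E x -> 0 <= f x)%E ->
  (\int[lebesgue_measure]_(x in D) f x <= \int[lebesgue_measure]_(x in E) f x)%E.
Proof.
move=> DE f0; rewrite integral_mkcond [X in (_ <= X)%E]integral_mkcond.
apply: ge0_le_integral_nomeas => x _; rewrite /patch.
  by case: ifPn => // /set_mem/DE; exact: f0.
case: ifPn => [/set_mem Dx|_]; first by rewrite mem_set ?lexx //; exact: DE.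
by case: ifPn => // /set_mem; exact: f0.
Qed.

Lemma integral_itv_cst {R : realType} (a b c : R) : a <= b ->
  (\int[lebesgue_measure]_(x in `[a, b]) c%:E = (c * (b - a))%:E)%E.
Proof.
move=> ab; rewrite integral_cst //= lebesgue_measure_itv /= lte_fin.
case: ltP => [_|ba]; first by rewrite -EFinD -EFinM.
have -> : b = a by apply/le_anti; rewrite ab ba.
by rewrite subrr mulr0 mule0.
Qed.

Lemma integral_itv_le_cst {R : realType} {a u M : R} {f : R -> R} : a <= u ->
  (forall x, a <= x <= u -> 0 <= f x <= M) ->
  (0 <= \int[lebesgue_measure]_(x in `[a, u]) (f x)%:E <= (M * (u - a))%:E)%E.
Proof.
move=> au fM; apply/andP; split.
  by apply: integral_ge0 => x; rewrite /= in_itv /= lee_fin => /fM /andP[].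
rewrite -integral_itv_cst //.
by apply: ge0_le_integral_nomeas => x; rewrite /= in_itv /= lee_fin => /fM /andP[].
Qed.

Lemma Rintegral_itv_le_cst {R : realType} {a u M : R} {f : R -> R} : a <= u ->
  (forall x, a <= x <= u -> 0 <= f x <= M) ->
  0 <= \int[lebesgue_measure]_(x in `[a, u]) f x <= M * (u - a).
Proof.
move=> au fM; have /andP[i0 iM] := integral_itv_le_cst au fM; rewrite /Rintegral.
have ifin : (\int[lebesgue_measure]_(x in `[a, u]) (f x)%:E)%E \is a fin_num.
  by rewrite ge0_fin_numE // (le_lt_trans iM) // ltry.
by rewrite -!lee_fin fineK // i0.
Qed.

(* int_a^oo K / x^2 dx = K / a, by the fundamental theorem of calculus on a
   half-line with primitive -K/x. *)
Lemma integral_itvy_inv_sqr {R : realType} (a K : R) : 0 < a -> 0 <= K ->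
  (\int[lebesgue_measure]_(x in `[a, +oo[) (K / x ^+ 2)%:E = (K / a)%:E)%E.
Proof.
move=> a0 K0.
have dF (x : R) : 0 < x -> is_derive x 1 (fun y : R => - (K * y^-1)) (K / x ^+ 2).
  move=> x0; have x_neq0 : x != 0 by rewrite gt_eqF.
  have := is_deriveN (is_deriveZ K (@is_deriveV R id x 1 1 x_neq0 (is_derive_id x 1))).
  by move=> h; apply: is_derive_eq h _; rewrite /GRing.scale /= mulr1 mulrN opprK.
rewrite (@ge0_continuous_FTC2y R (fun x => K / x ^+ 2) (fun y : R => - (K * y^-1)) a 0).
- by rewrite -EFinB sub0r opprK.
- by move=> x ax; rewrite divr_ge0 // sqr_ge0.
- apply: continuous_subspaceW (derivable_within_continuous (i := `]0, +oo[) _).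
    by move=> x /=; rewrite !in_itv /= !andbT => ax; rewrite (lt_le_trans a0 ax).
  move=> x; rewrite in_itv /= andbT => x0.
  apply: derivableM; first exact: derivable_cst.
  apply: derivableV; first by rewrite expf_neq0 // gt_eqF.
  by have [] := @is_deriveX R R id 2 x 1 1 (is_derive_id x 1).
- have inv_cvg0 : (fun x : R => x^-1) x @[x --> +oo] --> 0.
    by apply/gtr0_cvgV0; [near=> x | exact: cvg_id].
  rewrite -oppr0 -(mulr0 K); apply: cvgN; apply: cvgM => //; exact: cvg_cst.
- by move=> x ax; have [] := dF x (lt_trans a0 ax).
- have cFa : {for a, continuous (fun y : R => - (K * y^-1))}.
    by apply: differentiable_continuous; apply/derivable1_diffP; have [] := dF a a0.
  exact: cvg_at_right_filter.
- move=> x; rewrite in_itv /= andbT => ax.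
  by rewrite derive1E; have [_ ->] := dF x (lt_trans a0 ax).
Unshelve. all: by end_near. Qed.

Lemma integral_itvy_finite {R : realType} (a K : R) (F : R -> R) : 0 < a ->
  (forall u, a <= u -> 0 <= F u <= K / u ^+ 2) ->
  (\int[lebesgue_measure]_(u in `[a, +oo[) (F u)%:E < +oo)%E.
Proof.
move=> a0 FK.
have K0 : 0 <= K.
  have /andP[F0 FKa] := FK a (lexx a).
  have a2 : 0 < (a ^+ 2)^-1 by rewrite invr_gt0 exprn_gt0.
  by rewrite -(pmulr_lge0 _ a2) (le_trans F0).
apply: le_lt_trans (ltry (K / a)); rewrite -integral_itvy_inv_sqr //.
apply: ge0_le_integral_nomeas => u; rewrite /= in_itv /= andbT lee_fin => /FK /andP[] //.
Qed.

(* (y / m)^m <= e^y for y >= 0 and m > 0, from e^(y/m) >= 1 + y/m. *)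
Lemma powR_le_expR {R : realType} {y m : R} : 0 <= y -> 0 < m ->
  (y / m) `^ m <= expR y.
Proof.
move=> y0 m0.
have -> : expR y = expR (y / m) `^ m by rewrite -expRM mulrVK // unitfE gt_eqF.
apply: ge0_ler_powR; rewrite ?nnegrE ?expR_ge0 ?divr_ge0 ?(ltW m0) //.
by apply: le_trans (expR_ge1Dx _); rewrite lerDr.
Qed.

Lemma cube_le_expR_powR {R : realType} {k p : R} : 0 < k -> 0 < p ->
  exists2 A : R, 0 < A & forall w : R, 0 <= w -> A * w ^+ 3 <= expR (k * w `^ p).
Proof.
move=> k0 p0; set m := 3 / p; have m0 : 0 < m by rewrite divr_gt0.
exists ((k / m) `^ m); first by rewrite powR_gt0 // divr_gt0.
move=> w w0; have kw0 : 0 <= k * w `^ p by rewrite mulr_ge0 ?powR_ge0 ?ltW.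
apply: le_trans _ (powR_le_expR kw0 m0).
have km0 : 0 <= k / m by rewrite divr_ge0 // ltW.
rewrite mulrAC (powRM _ km0 (powR_ge0 _ _)) -powRrM.
have pm : p * m = 3%:R by rewrite /m mulrC divfK // gt_eqF.
by rewrite pm powR_mulrn.
Qed.

Lemma integrand_le_linear {R : realType} {alpha Delta r' u J I ga : R} :
  0 < alpha < 1 -> 0 < Delta -> 0 <= r' <= u -> I <= 0 ->
  0 <= J <= (u - r') * expR (- I) -> Delta^-1 <= ga ->
  0 <= (J + 1) `^ alpha * expR I / ga <= Delta * ((u + 1) * expR ((1 - alpha) * I)).
Proof.
move=> /andP[al0 al1] D0 /andP[r'0 r'u] I0 /andP[J0 JI] Dga.
have ga0 : 0 < ga by apply: lt_le_trans Dga; rewrite invr_gt0.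
have E1 : 1 <= expR (- I) by rewrite -expR0 ler_expR oppr_ge0.
have J1 : J + 1 <= (u + 1) * expR (- I).
  have : 0 <= r' * expR (- I) by rewrite mulr_ge0 ?expR_ge0.
  nra.
have J1_alpha : (J + 1) `^ alpha <= (u + 1) * expR (- I * alpha).
  apply: le_trans (_ : _ <= ((u + 1) * expR (- I)) `^ alpha) _.
    by apply: ge0_ler_powR; rewrite ?nnegrE ?mulr_ge0 ?expR_ge0 //; lra.
  rewrite expRM powRM ?expR_ge0 //; last lra.
  by apply: ler_wpM2r; [exact: powR_ge0 | apply: ler1_powR; lra].
have num : (J + 1) `^ alpha * expR I <= (u + 1) * expR ((1 - alpha) * I).
  apply: le_trans (ler_wpM2r (expR_ge0 I) J1_alpha) _.
  by rewrite -mulrA -expRD; apply: ler_wpM2l; [lra | rewrite ler_expR; lra].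
rewrite divr_ge0 ?mulr_ge0 ?powR_ge0 ?expR_ge0 ?(ltW ga0) //=.
have Dga1 : 1 <= Delta * ga by rewrite -(mulfV (lt0r_neq0 D0)) ler_wpM2l // ltW.
have Y0 : 0 <= (u + 1) * expR ((1 - alpha) * I) by rewrite mulr_ge0 ?expR_ge0 //; lra.
rewrite ler_pdivrMr //; nra.
Qed.

Lemma linear_exp_decay_le {R : realType} (Delta A r' u E : R) :
  0 <= Delta -> 0 < A -> 1 <= r' <= u -> 0 <= E <= 1 ->
  (2 * r' <= u -> A * (u / 2) ^+ 3 * E <= 1) ->
  Delta * ((u + 1) * E) <=
    (12 * Delta / A + Delta * (2 * r' + 1) * (2 * r') ^+ 2) / u ^+ 2.
Proof.
move=> D0 A0 /andP[r'1 r'u] /andP[E0 E1] Edecay.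
have KA : 0 <= 12 * Delta / A by rewrite divr_ge0 // ?mulr_ge0 // ltW.
have u0 : 0 < u by lra.
rewrite ler_pdivlMr ?exprn_gt0 //.
have -> : Delta * ((u + 1) * E) * u ^+ 2 = Delta * ((u + 1) * E * u ^+ 2) by ring.
have [u_small|u_large] := leP u (2 * r').
- have hu : (u + 1) * E * u ^+ 2 <= (2 * r' + 1) * (2 * r') ^+ 2.
    apply: ler_pM; rewrite ?sqr_ge0 ?mulr_ge0 //; try lra; first nra.
    by rewrite ler_sqr ?nnegrE; lra.
  by have := ler_wpM2l D0 hu; rewrite mulrA; lra.
- have cube : A * (u ^+ 3 * E) <= 8.
    by have := Edecay (ltW u_large); rewrite !exprS expr0; lra.
  have hu : (u + 1) * E * u ^+ 2 <= 12 / A.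
    rewrite ler_pdivlMr //.
    have : (u + 1) * E * u ^+ 2 <= 3 / 2 * (u ^+ 3 * E).
      have : 0 <= E * u ^+ 2 * (u - 2) by rewrite !mulr_ge0 ?sqr_ge0 //; lra.
      by rewrite !exprS expr0; lra.
    nra.
  have Y0 : 0 <= Delta * (2 * r' + 1) * (2 * r') ^+ 2.
    by rewrite !mulr_ge0 ?sqr_ge0 //; lra.
  have -> : 12 * Delta / A = Delta * (12 / A) by ring.
  by have := ler_wpM2l D0 hu; lra.
Qed.

Definition radial_integral {R : realType} (io : R -> R) (r' u : R) : R :=
  \int[lebesgue_measure]_(s in `[r', u]) (io s / s).

(* Throughout this section io plays the role of iota0: it decays like -c s^p
   beyond r' >= 1 and is bounded below on compact intervals. *)
Section RadialIntegral.
Context {R : realType} {io : R -> R} {r' c p : R}.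
Hypotheses (r'_ge1 : 1 <= r') (c_gt0 : 0 < c) (p_gt0 : 0 < p).
Hypothesis io_decay : forall s, r' <= s -> io s <= - (c * s `^ p).
Hypothesis io_local_lb : forall u, exists L, forall s, r' <= s <= u -> - L <= io s.

(* The nonnegative density h = -io(s)/s, so that I(u) = -int_{r'}^u h. *)
Let h (s : R) : R := - (io s / s).

Let pos_of_ge {s : R} : r' <= s -> 0 < s.
Proof. by move=> hs; have := r'_ge1; lra. Qed.

Let h_lb {s : R} : r' <= s -> c * s `^ p / s <= h s.
Proof.
move=> hs; have s0 := pos_of_ge hs.
by rewrite /h -mulNr ler_wpM2r ?invr_ge0 ?(ltW s0) // lerNr io_decay.
Qed.

Let h_ge0 {s : R} : r' <= s -> 0 <= h s.
Proof.
move=> hs; have s0 := pos_of_ge hs.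
by apply: le_trans _ (h_lb hs); rewrite divr_ge0 ?mulr_ge0 ?powR_ge0 ?(ltW c_gt0) ?(ltW s0).
Qed.

Let integral_h_bounded {u : R} : r' <= u -> exists M,
  (0 <= \int[lebesgue_measure]_(s in `[r', u]) (h s)%:E <= M%:E)%E.
Proof.
move=> hu; have [L hL] := io_local_lb u; exists (`|L| * (u - r')).
apply: integral_itv_le_cst => // s /andP[hs1 hs2]; rewrite h_ge0 //=.
have s1 : 1 <= s by have := r'_ge1; lra.
rewrite /h -mulNr ler_pdivrMr; last lra.
have := hL s; rewrite hs1 hs2 => /(_ isT).
have := ler_norm L; have := normr_ge0 L; nra.
Qed.

Let radial_integralE {u : R} : r' <= u ->
  (radial_integral io r' u)%:E = (- \int[lebesgue_measure]_(s in `[r', u]) (h s)%:E)%E.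
Proof.
move=> hu; have [M /andP[i0 iM]] := integral_h_bounded hu.
have ifin : (\int[lebesgue_measure]_(s in `[r', u]) (h s)%:E)%E \is a fin_num.
  by rewrite ge0_fin_numE // (le_lt_trans iM) // ltry.
rewrite /radial_integral /Rintegral.
have -> : (\int[lebesgue_measure]_(s in `[r', u]) (io s / s)%:E =
    - \int[lebesgue_measure]_(s in `[r', u]) (h s)%:E)%E.
  rewrite -integral_ge0N; last by move=> s; rewrite /= in_itv /= lee_fin => /andP[/h_ge0].
  by apply: eq_integral => s _; rewrite /h EFinN oppeK.
by rewrite fineK // fin_numN.
Qed.

Lemma radial_integral_le0 {u : R} : r' <= u -> radial_integral io r' u <= 0.
Proof.
move=> hu; rewrite -lee_fin radial_integralE // oppe_le0.
by apply: integral_ge0 => s; rewrite /= in_itv /= lee_fin => /andP[/h_ge0].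
Qed.

Lemma radial_integral_antitone {u v : R} : r' <= v -> v <= u ->
  radial_integral io r' u <= radial_integral io r' v.
Proof.
move=> hv vu; rewrite -lee_fin !radial_integralE ?(le_trans hv) // leeN2.
apply: ge0_subset_integral_nomeas => [s|s]; rewrite /= !in_itv /=.
  by case/andP => -> /le_trans ->.
by rewrite lee_fin => /andP[/h_ge0].
Qed.

Lemma radial_integral_decay {u : R} : 2 * r' <= u ->
  radial_integral io r' u <= - (c / 2 * (u / 2) `^ p).
Proof.
move=> hu; have r'u : r' <= u by have := r'_ge1; lra.
have u0 := pos_of_ge r'u.
set m := c * (u / 2) `^ p / u.
have -> : c / 2 * (u / 2) `^ p = m * (u - u / 2) by rewrite /m; field; rewrite gt_eqF.
rewrite -lee_fin radial_integralE // EFinN leeN2 -integral_itv_cst; last lra.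
apply: (@le_trans _ _ (\int[lebesgue_measure]_(s in `[(u / 2)%R, u]) (h s)%:E)%E).
  apply: ge0_le_integral_nomeas => s; rewrite /= in_itv /= lee_fin => /andP[hs1 hs2].
    by rewrite /m divr_ge0 ?mulr_ge0 ?powR_ge0 ?(ltW c_gt0) ?(ltW u0).
  have s0 : 0 < s by lra.
  apply: le_trans _ (h_lb _); last by have := r'_ge1; lra.
  rewrite /m -!mulrA ler_wpM2l ?(ltW c_gt0) // ler_pM ?powR_ge0 ?invr_ge0 ?(ltW u0) //.
    by apply: ge0_ler_powR; rewrite ?nnegrE ?(ltW p_gt0) //; lra.
  by rewrite lef_pV2 ?posrE.
apply: ge0_subset_integral_nomeas => [s|s]; rewrite /= !in_itv /=.
  by case/andP => hs -> ; rewrite andbT; lra.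
by rewrite lee_fin => /andP[/h_ge0].
Qed.

(* Since -I is nondecreasing, int_{r'}^u e^(-I) <= (u - r') e^(-I(u)). *)
Lemma exp_radial_integral_le {u : R} : r' <= u ->
  0 <= \int[lebesgue_measure]_(v in `[r', u]) expR (- radial_integral io r' v)
    <= (u - r') * expR (- radial_integral io r' u).
Proof.
move=> hu; rewrite mulrC; apply: Rintegral_itv_le_cst => // v /andP[hv vu].
by rewrite expR_ge0 ler_expR lerN2 radial_integral_antitone.
Qed.

Lemma integrand_decay {alpha Delta : R} {ga : R -> R} :
  0 < alpha < 1 -> 1 <= Delta -> (forall u, r' <= u -> Delta^-1 <= ga u) ->
  exists K, forall u, r' <= u ->
    0 <= (\int[lebesgue_measure]_(v in `[r', u]) expR (- radial_integral io r' v) + 1)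
           `^ alpha * expR (radial_integral io r' u) / ga u <= K / u ^+ 2.
Proof.
move=> halpha hDelta ga_lb; have /andP[al0 al1] := halpha.
have k0 : 0 < (1 - alpha) * (c / 2) by rewrite mulr_gt0 ?divr_gt0 // subr_gt0.
have [A A0 cubeA] := cube_le_expR_powR k0 p_gt0.
exists (12 * Delta / A + Delta * (2 * r' + 1) * (2 * r') ^+ 2) => u hu.
have I0 := radial_integral_le0 hu.
have r'u : 0 <= r' <= u by rewrite hu andbT; have := r'_ge1; lra.
have D0 : 0 < Delta by lra.
have /andP[-> bound] :=
  integrand_le_linear halpha D0 r'u I0 (exp_radial_integral_le hu) (ga_lb u hu).
apply: le_trans bound _; apply: linear_exp_decay_le; rewrite ?(ltW D0) ?r'_ge1 //.
  by rewrite expR_ge0 expR_le1 /= mulr_ge0_le0 // subr_ge0 ltW.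
move=> u_large; have w0 : 0 <= u / 2 by have := r'_ge1; lra.
apply: le_trans (ler_wpM2r (expR_ge0 _) (cubeA _ w0)) _.
rewrite -expRD expR_le1 -mulrA -mulrDr mulr_ge0_le0 ?subr_ge0 ?(ltW al1) //.
by have := radial_integral_decay u_large; lra.
Qed.

End RadialIntegral.

(* Elementary facts about the Euclidean norm and the point s e_0 on the first
   coordinate axis, used as a witness on the sphere of radius s. *)
Lemma enorm0 {R : realType} {d : nat} : enorm (0 : 'cV[R]_d) = 0.
Proof. by rewrite /enorm /dotv big1 ?sqrtr0 // => i _; rewrite mxE mul0r. Qed.

Lemma dotv_e0 {R : realType} {d : nat} (s : R) (y : 'cV[R]_d.+1) :
  dotv (s *: delta_mx 0 0) y = s * y 0 0.
Proof.
rewrite /dotv (bigD1 ord0) //= big1 ?addr0; first by rewrite !mxE eqxx mulr1.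
by move=> i /negPf ni; rewrite !mxE ni mulr0 mul0r.
Qed.

Lemma enorm_e0 {R : realType} {d : nat} (s : R) : 0 <= s ->
  enorm (s *: (delta_mx 0 0 : 'cV[R]_d.+1)) = s.
Proof. by move=> s0; rewrite /enorm dotv_e0 !mxE eqxx mulr1 -expr2 sqrtr_sqr ger0_norm. Qed.

Lemma coord_le_enorm {R : realType} {d : nat} (y : 'cV[R]_d.+1) : `|y 0 0| <= enorm y.
Proof.
rewrite /enorm /dotv (bigD1 ord0) //= -sqrtr_sqr ler_wsqrtr // expr2 lerDl.
by apply: sumr_ge0 => i _; rewrite -expr2 sqr_ge0.
Qed.

Lemma sphere_e0 {R : realType} {d : nat} (s : R) : 0 <= s ->
  sphere s (s *: (delta_mx 0 0 : 'cV[R]_d.+1)).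
Proof. exact: enorm_e0. Qed.

Lemma sphere_neq0 {R : realType} {d : nat} {s : R} {x : 'cV[R]_d} :
  0 < s -> sphere s x -> x != 0.
Proof.
by move=> s0 xs; apply/eqP => x0; move: xs s0; rewrite /sphere /= x0 enorm0 => <-; rewrite ltxx.
Qed.

(* A = Tr(sigma sigma^T) / 2 is a sum of squares. *)
Lemma Acoef_ge0 {R : realType} {d n : nat} (sigma : 'cV[R]_d -> 'M[R]_(d, n)) x :
  0 <= Acoef sigma x.
Proof.
rewrite /Acoef /cmat /mxtrace mulr_ge0 ?invr_ge0 //.
by apply: sumr_ge0 => i _; rewrite !mxE; apply: sumr_ge0 => j _; rewrite !mxE -expr2 sqr_ge0.
Qed.

(* The algebra behind the decay of iota0: the drift condition with
   |x|-dependent bound P >= Delta and C in [1/Delta, Delta] bound the quotient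
   (2A - C + 2B) / C by -P / Delta. *)
Lemma drift_ratio_le {R : realType} {A C B gam Delta P : R} :
  0 < gam -> 0 < Delta -> Delta^-1 <= C <= Delta -> Delta <= P ->
  A - (1 - gam / 2) * C + B <= - P ->
  (2 * A - C + 2 * B) / C <= - (P / Delta).
Proof.
move=> gam0 D0 /andP[DC CD] DP drift.
have C0 : 0 < C by apply: lt_le_trans DC; rewrite invr_gt0.
rewrite ler_pdivrMr // mulNr.
set q := P / Delta; have qD : q * Delta = P by rewrite /q divfK ?lt0r_neq0.
have q1 : 1 <= q by rewrite /q ler_pdivlMr ?mul1r.
have qC : q * C <= P by rewrite -qD ler_wpM2l // (le_trans ler01 q1).
have Cq : C <= q * C by rewrite ler_peMl // ltW.
have gC : 0 <= gam * C by rewrite mulr_ge0 // ltW.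
lra.
Qed.

Lemma drift_ratio_ge {R : realType} {A C B N Delta : R} :
  0 <= A -> 0 < Delta -> Delta^-1 <= C -> 0 <= N -> - N <= B ->
  - (1 + 2 * N * Delta) <= (2 * A - C + 2 * B) / C.
Proof.
move=> A0 D0 DC N0 NB.
have C0 : 0 < C by apply: lt_le_trans DC; rewrite invr_gt0.
have DC1 : 1 <= Delta * C by rewrite -(mulfV (lt0r_neq0 D0)) ler_wpM2l // ltW.
have : 0 <= N * (Delta * C - 1) by rewrite mulr_ge0 // subr_ge0.
by rewrite ler_pdivlMr //; lra.
Qed.

(* Estimates on iota0 and gamma0 beyond a radius r' where the drift bound
   Gam s^p already exceeds Delta; in dimension d + 1 every sphere is nonempty. *)
Section CoefficientBounds.
Context {R : realType} {d n : nat}.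
Context {b : 'cV[R]_d.+1 -> 'cV[R]_d.+1} {sigma : 'cV[R]_d.+1 -> 'M[R]_(d.+1, n)}.
Context {r0 r' Delta gam Gam p : R}.
Hypotheses (r0_le_r' : r0 <= r') (r'_gt0 : 0 < r') (Delta_gt0 : 0 < Delta) (gam_gt0 : 0 < gam).
Hypothesis r'_large : forall s, r' <= s -> Delta <= Gam * s `^ p.
Hypothesis hC0 : forall x, x != 0 -> r0 <= enorm x -> Delta^-1 <= C0 sigma x <= Delta.
Hypothesis hdrift : forall x, x != 0 -> r0 <= enorm x ->
  Acoef sigma x - (1 - gam / 2) * C0 sigma x + B0 b x <= - Gam * enorm x `^ p.

Let e0 : 'cV[R]_d.+1 := delta_mx 0 0.

Let ratio (x : 'cV[R]_d.+1) : R :=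
  (2 * Acoef sigma x - C0 sigma x + 2 * B0 b x) / C0 sigma x.

Let C0_bounds {s : R} {x : 'cV[R]_d.+1} : r' <= s -> sphere s x ->
  x != 0 /\ Delta^-1 <= C0 sigma x <= Delta.
Proof.
move=> hs xs; have s0 : 0 < s by have := r'_gt0; lra.
have x0 := sphere_neq0 s0 xs; split => //; apply: hC0 => //.
by rewrite xs; have := r0_le_r'; lra.
Qed.

Let ratio_le {s : R} {x : 'cV[R]_d.+1} : r' <= s -> sphere s x ->
  ratio x <= - (Gam / Delta * s `^ p).
Proof.
move=> hs xs; have [x0 C0x] := C0_bounds hs xs.
rewrite mulrAC /ratio; apply: (drift_ratio_le gam_gt0 Delta_gt0 C0x (r'_large s hs)).
have nx : enorm x = s := xs.
by have := hdrift x x0; rewrite nx mulNr; apply; have := r0_le_r'; lra.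
Qed.

Lemma iota0_decay (s : R) : r' <= s -> iota0 b sigma s <= - (Gam / Delta * s `^ p).
Proof.
move=> hs; have s0 : 0 <= s by have := r'_gt0; lra.
apply: ge_sup; first by exists (ratio (s *: e0)), (s *: e0) => //; exact: sphere_e0.
by move=> _ [x xs <-]; exact: ratio_le.
Qed.

Lemma gamma0_lb (u : R) : r' <= u -> Delta^-1 <= gamma0 sigma u.
Proof.
move=> hu; have u0 : 0 <= u by have := r'_gt0; lra.
apply: lb_le_inf; first by exists (C0 sigma (u *: e0)), (u *: e0) => //; exact: sphere_e0.
by move=> _ [x xs <-]; have [_ /andP[]] := C0_bounds hu xs.
Qed.

(* Local boundedness of b (condition (C1)) bounds iota0 below on compacts,
   using the point s e_0 of the sphere and |B0(s e_0)| <= s |b(s e_0)|. *)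
Lemma iota0_local_lb :
  (forall r, 0 < r -> exists M, forall x, enorm x < r -> enorm (b x) + hs (sigma x) <= M) ->
  forall u, exists L, forall s, r' <= s <= u -> - L <= iota0 b sigma s.
Proof.
move=> b_loc_bdd u; have u1 : 0 < `|u| + 1 by rewrite ltr_pwDr ?normr_ge0.
have [M hM] := b_loc_bdd _ u1.
have bM x : enorm x < `|u| + 1 -> enorm (b x) <= M.
  by move=> /hM; have := sqrtr_ge0 (hs2 (sigma x)); rewrite /hs; lra.
have M0 : 0 <= M by apply: le_trans (bM 0 _); rewrite ?enorm0 ?sqrtr_ge0.
exists (1 + 2 * (`|u| * M) * Delta) => s /andP[hs su].
have s0 : 0 < s by have := r'_gt0; lra.
have us : s <= `|u| by apply: le_trans su (ler_norm u).
have xs : sphere s (s *: e0) := sphere_e0 s (ltW s0).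
have [_ /andP[C0x _]] := C0_bounds hs xs.
have hB : - (`|u| * M) <= B0 b (s *: e0).
  have := coord_le_enorm (b (s *: e0)); rewrite ler_norml => /andP[hb _].
  have hbM : enorm (b (s *: e0)) <= M by apply: bM; rewrite enorm_e0 ?(ltW s0) //; lra.
  rewrite /B0 dotv_e0; nra.
apply: le_trans (drift_ratio_ge (Acoef_ge0 _ _) Delta_gt0 C0x (mulr_ge0 (normr_ge0 u) M0) hB) _.
apply: ub_le_sup; last by exists (s *: e0).
by exists (- (Gam / Delta * s `^ p)) => _ [x xs' <-]; exact: ratio_le.
Qed.

End CoefficientBounds.

(* In dimension 0 every sphere of positive radius is empty, so gamma0 = inf of
   the empty set = 0 and the integrand of the theorem vanishes. *)
Lemma gamma0_dim0 {R : realType} {n : nat} (sigma : 'cV[R]_0 -> 'M[R]_(0, n)) (u : R) :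
  0 < u -> gamma0 sigma u = 0.
Proof.
move=> u0; rewrite /gamma0 (_ : [set _ | _ in _] = set0) ?inf0 //.
apply/seteqP; split => // z [x xu _].
have x0 : enorm x = 0 by rewrite /enorm /dotv big_ord0 sqrtr0.
by move: xu u0; rewrite /sphere /= x0 => <-; rewrite ltxx.
Qed.

Lemma exists_radius_powR_ge {R : realType} (a m p : R) : 0 < p ->
  exists2 r, a <= r & forall s, r <= s -> m <= s `^ p.
Proof.
move=> p0; exists (Num.max a (`|m| `^ p^-1)); first by rewrite le_max lexx.
move=> s; rewrite ge_max => /andP[_ ms]; apply: le_trans (ler_norm m) _.
have -> : `|m| = (`|m| `^ p^-1) `^ p.
  by rewrite -powRrM mulVf ?lt0r_neq0 // powRr1.
apply: ge0_ler_powR; rewrite ?nnegrE ?powR_ge0 ?(ltW p0) //.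
exact: le_trans (powR_ge0 _ _) ms.
Qed.

Theorem proposition2p5 (R : realType) (d n : nat)
  (b : 'cV[R]_d -> 'cV[R]_d) (sigma : 'cV[R]_d -> 'M[R]_(d, n))
  (b_meas : borel_fun b) (sigma_meas : borel_fun sigma)
  (C1 : forall r : R, 0 < r -> exists M : R, forall x : 'cV[R]_d,
          enorm x < r -> enorm (b x) + hs (sigma x) <= M)
  (C2 : forall r : R, 0 < r -> exists Gr : R, 0 < Gr /\
          forall x y : 'cV[R]_d, enorm x < r -> enorm y < r ->
            2 * dotv (x - y) (b x - b y) + hs2 (sigma x - sigma y)
              <= Gr * enorm (x - y) ^+ 2)
  (C3 : exists G : R, 0 < G /\ forall x : 'cV[R]_d,
          2 * dotv x (b x) + hs2 (sigma x) <= G * (1 + enorm x ^+ 2))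
  (alpha gam Gam r0 Delta : R)
  (halpha : 0 < alpha < 1) (hgam : 0 < gam) (hGam : 0 < Gam) (hr0 : 0 <= r0)
  (hdrift : forall x : 'cV[R]_d, x != 0 -> r0 <= enorm x ->
     Acoef sigma x - (1 - gam / 2) * C0 sigma x + B0 b x
       <= - Gam * enorm x `^ (gam * alpha - gam + 2))
  (hgam_small : gam < 2 / (1 - alpha))
  (hDelta : 1 <= Delta)
  (hC0 : forall x : 'cV[R]_d, x != 0 -> r0 <= enorm x ->
     Delta^-1 <= C0 sigma x <= Delta) :
  exists r' : R, r0 <= r' /\
    (\int[lebesgue_measure]_(u in `[r', +oo[)
       (((\int[lebesgue_measure]_(v in `[r', u]) expR (- I0 b sigma r' v)) + 1)
          `^ alpha * expR (I0 b sigma r' u) / gamma0 sigma u)%:E < +oo)%E.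
Proof.
destruct d as [|d].
  exists (r0 + 1); split; first by rewrite lerDl.
  rewrite integral0_eq // => u; rewrite /= in_itv /= andbT => hu.
  by rewrite gamma0_dim0 ?invr0 ?mulr0 //; lra.
have /andP[al0 al1] := halpha.
set p := gam * alpha - gam + 2.
have p0 : 0 < p by move: hgam_small; rewrite ltr_pdivlMr ?subr_gt0 // /p; lra.
have D0 : 0 < Delta by lra.
have [r' r'_ge r'_pow] := exists_radius_powR_ge (r0 + 1) (Delta / Gam) p p0.
have r'_large s : r' <= s -> Delta <= Gam * s `^ p.
  by move=> /r'_pow; rewrite ler_pdivrMr // mulrC.
have r'_ge1 : 1 <= r' by lra.
have r'_gt0 : 0 < r' by lra.
have r0_le_r' : r0 <= r' by lra.
have io_decay := iota0_decay r0_le_r' r'_gt0 D0 hgam r'_large hC0 hdrift.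
have io_lb := iota0_local_lb r0_le_r' r'_gt0 D0 hgam r'_large hC0 hdrift C1.
have ga_lb := gamma0_lb r0_le_r' r'_gt0 hC0.
have [K hK] := integrand_decay r'_ge1 (divr_gt0 hGam D0) p0 io_decay io_lb
  halpha hDelta ga_lb.
exists r'; split => //; exact: integral_itvy_finite r'_gt0 hK.
Qed.
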